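(* Let $\mathcal{H}_c=\mathcal{H}_{c'}=\ell^2(\mathbb{Z})$ with orthonormal bases $(|\tau\rangle_c)_{\tau\in\mathbb{Z}}$, $(|\tau\rangle_{c'})_{\tau\in\mathbb{Z}}$ and bilateral shifts $U_c|\tau\rangle_c=|\tau+1\rangle_c$, $U_{c'}|\tau\rangle_{c'}=|\tau+1\rangle_{c'}$. Let $\mathcal{H}_r$, $\mathcal{H}_{r'}$ be separable Hilbert spaces with $\dim\mathcal{H}_r=\dim\mathcal{H}_{r'}$ and unitaries $U_r$, $U_{r'}$ on them; set $U=U_c\otimes U_r$, $U'=U_{c'}\otimes U_{r'}$. For any unit vectors $|\psi(0)\rangle_r\in\mathcal{H}_r$, $|\psi'(0)\rangle_{r'}\in\mathcal{H}_{r'}$, with $|\Psi(\tau)\rangle=U^\tau|0\rangle_c|\psi(0)\rangle_r=|\tau\rangle_c U_r^\tau|\psi(0)\rangle_r$ and $|\Psi'(\tau)\rangle=U'^\tau|0\rangle_{c'}|\psi'(0)\rangle_{r'}$, there exists a unitary operator $S:\mathcal{H}_c\otimes\mathcal{H}_r\to\mathcal{H}_{c'}\otimes\mathcal{H}_{r'}$ such that $|\Psi'(\tau)\rangle=S|\Psi(\tau)\rangle$ for all $\tau\in\mathbb{Z}$ and $U'=SUS^{-1}$.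
   Context: This is the infinite discrete-time Page-Wootters setting: a clock with time values $\tau\in\mathbb{Z}$ whose one-step evolution is the bilateral shift, and a ''rest of the world'' with one-step unitary evolution $U_r$. *)

From HB Require Import structures.
From mathcomp Require Import all_boot all_order all_algebra.
From mathcomp Require Import complex.
From mathcomp Require Import all_classical all_reals all_analysis.
Set Implicit Arguments. Unset Strict Implicit. Unset Printing Implicit Defensive.
Import Order.TTheory GRing.Theory Num.Theory.
Local Open Scope ring_scope.

Definition pw_sqmod (R : realType) (z : R[i]) : R := (complex.Re z) ^+ 2 + (complex.Im z) ^+ 2.

Definition pw_sqnorm (R : realType) (T : countType) (f : T -> R[i]) : \bar R :=
  (\esum_(x in [set: T]) (pw_sqmod (f x))%:E)%E.

Definition pw_l2 (R : realType) (T : countType) (f : T -> R[i]) : Prop :=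
  (pw_sqnorm f < +oo)%E.

(* S is a unitary operator l^2(T) -> l^2(T'): a linear, norm-preserving,
   surjective map of l^2(T) onto l^2(T') (values outside l^2 are irrelevant). *)
Definition pw_unitary (R : realType) (T T' : countType)
    (S : (T -> R[i]) -> (T' -> R[i])) : Prop :=
  [/\ forall f, pw_l2 f -> pw_l2 (S f),
      forall (a : R[i]) f g, pw_l2 f -> pw_l2 g ->
        S (fun x => a * f x + g x) = (fun y => a * S f y + S g y),
      forall f, pw_l2 f -> pw_sqnorm (S f) = pw_sqnorm f
    & forall g, pw_l2 g -> exists2 f, pw_l2 f & S f = g].

(* l^2(Z) (x) l^2(I) is identified with l^2(Z * I); |tau>_c (x) |phi> is
   (t, i) |-> [t == tau] phi i. *)
Definition pw_ket (R : realType) (I : countType) (tau : int) (phi : I -> R[i])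
  : int * I -> R[i] :=
  fun p => if p.1 == tau then phi p.2 else 0.

(* U_c (x) U_r where U_c is the bilateral shift |tau> |-> |tau+1>:
   (U F)(t, i) = (U_r F(t-1, .))(i). *)
Definition pw_shift_tensor (R : realType) (I : countType)
    (Ur : (I -> R[i]) -> (I -> R[i])) (F : int * I -> R[i]) : int * I -> R[i] :=
  fun p => Ur (fun i => F (p.1 - 1, i)) p.2.

Definition pw_orbit (R : realType) (T : countType)
    (U : (T -> R[i]) -> (T -> R[i])) (v : T -> R[i]) (Psi : int -> T -> R[i]) : Prop :=
  Psi 0 = v /\ forall t : int, pw_l2 (Psi t) /\ Psi (t + 1) = U (Psi t).

From HB Require Import structures.
From mathcomp Require Import all_boot all_order all_algebra.
From mathcomp Require Import complex.
From mathcomp Require Import all_classical all_reals all_analysis.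
From mathcomp.algebra_tactics Require Import ring lra.
From mathcomp Require Import zify.
Set Implicit Arguments. Unset Strict Implicit. Unset Printing Implicit Defensive.
Import Order.TTheory GRing.Theory Num.Theory.
Local Open Scope ring_scope.

(* The orbit of [|0>|psi>] under [U_c (x) U_r] is [tau |-> |tau> (x) U_r^tau psi].
   Transporting along the bijection [I ~ J], then reflecting along [psi - mu psi']
   (with the phase [mu] chosen so that [<psi', psi> / mu] is real) and multiplying
   by [mu^-1], gives a unitary [W : l2(I) -> l2(J)] with [W psi = psi'].  The
   operator acting on the [tau]-th slice of [l2(Z * I)] by [U_r'^tau W U_r^-tau] is
   unitary, maps [|tau> (x) U_r^tau psi] to [|tau> (x) U_r'^tau psi'], and
   intertwines the two shifts. *)

Local Notation Re := (@complex.Re _).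
Local Notation Im := (@complex.Im _).

Section RealSum.
Context {R : realType} {T : choiceType}.
Implicit Types (f g a b : T -> R) (k : R).

Definition esumr f : \bar R := (\esum_(x in [set: T]) (f x)%:E)%E.

Definition rsummable f := (esumr (fun x => `|f x|%R) < +oo)%E.

(* [f = (|f| + f) - |f|] writes [f] as a difference of two nonnegative families. *)
Definition rsum f : R :=
  fine (esumr (fun x => `|f x| + f x)%R) - fine (esumr (fun x => `|f x|)%R).

Lemma esumr_ge0 f : (forall x, 0 <= f x) -> (0 <= esumr f)%E.
Proof. by move=> f0; apply: esum_ge0 => x _; rewrite lee_fin. Qed.

Lemma le_esumr f g : (forall x, f x <= g x) -> (esumr f <= esumr g)%E.
Proof. by move=> fg; apply: le_esum => x _; rewrite lee_fin. Qed.

Lemma esumr_ge f x : (forall y, 0 <= f y) -> ((f x)%:E <= esumr f)%E.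
Proof.
move=> f0; apply: esum_ge; exists [set x]%classic; last by rewrite fsbig_set1.
by split => //; exact: finite_set1.
Qed.

Lemma esumrD f g : (forall x, 0 <= f x) -> (forall x, 0 <= g x) ->
  esumr (fun x => f x + g x) = (esumr f + esumr g)%E.
Proof. by move=> f0 g0; rewrite /esumr -esumD // => x _; rewrite lee_fin. Qed.

Lemma esumrZ k f : 0 <= k -> (forall x, 0 <= f x) ->
  esumr (fun x => k * f x) = (k%:E * esumr f)%E.
Proof.
move=> k0 f0; rewrite /esumr /esum -ereal_supZl //; last first.
  by apply/set0P; exists 0%E, set0; [exact: fsets_set0 | rewrite fsbig_set0].
have sumZ X : finite_set X ->
    (\sum_(x \in X) (k * f x)%:E = k%:E * \sum_(x \in X) (f x)%:E)%E.
  by move=> finX; rewrite !fsumEFin // -EFinM !fsbig_finite //= big_distrr.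
congr ereal_sup; apply/seteqP; split => y.
  move=> [X [finX _] <-]; rewrite sumZ //.
  by exists (\sum_(x \in X) (f x)%:E)%E => //; exists X.
by move=> [_ [X finX <-] <-]; exists X => //; rewrite sumZ //; case: finX.
Qed.

Lemma esumr0 : esumr (fun=> 0) = 0%E.
Proof. exact: esum1. Qed.

Lemma rsummable_ge0 f : (forall x, 0 <= f x) -> rsummable f <-> (esumr f < +oo)%E.
Proof.
by move=> f0; rewrite /rsummable (_ : (fun x => `|f x|) = f) // funeqE => x; rewrite ger0_norm.
Qed.

Lemma rsummable_le f g : (forall x, `|f x| <= g x) -> rsummable g -> rsummable f.
Proof.
move=> fg; apply: le_lt_trans; apply: le_esumr => x.
exact: le_trans (fg x) (ler_norm (g x)).
Qed.

Lemma rsummable_norm f : rsummable f -> rsummable (fun x => `|f x|).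
Proof.
by rewrite /rsummable (_ : (fun x => _) = (fun x => `|f x|)) // funeqE => x /=; rewrite normr_id.
Qed.

Lemma rsummableD f g : rsummable f -> rsummable g -> rsummable (fun x => f x + g x).
Proof.
move=> sf sg; apply: (@rsummable_le _ (fun x => `|f x| + `|g x|)) => [x|].
  exact: ler_normD.
by apply/rsummable_ge0 => [x|]; rewrite ?addr_ge0 // esumrD // lte_add_pinfty.
Qed.

Lemma rsummableZ k f : rsummable f -> rsummable (fun x => k * f x).
Proof.
rewrite /rsummable (_ : (fun x => `|k * f x|) = (fun x => `|k| * `|f x|)).
  by move=> sf; rewrite esumrZ // lte_mul_pinfty.
by rewrite funeqE => x; rewrite normrM.
Qed.

Lemma rsummable_comb f k g : rsummable f -> rsummable g ->
  rsummable (fun x => f x + k * g x).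
Proof. by move=> sf sg; apply: rsummableD => //; apply: rsummableZ. Qed.

Lemma esumr_rsum f : (forall x, 0 <= f x) -> rsummable f -> esumr f = (rsum f)%:E.
Proof.
move=> f0 /(rsummable_ge0 f0) sf; have nf x : `|f x| = f x by rewrite ger0_norm.
have fin_f : esumr f \is a fin_num by rewrite ge0_fin_numE ?esumr_ge0.
rewrite /rsum (eq_fun (fun x => congr1 (+%R^~ (f x)) (nf x))) (eq_fun nf).
by rewrite esumrD // fineD // addrK fineK.
Qed.

Lemma normr_add_ge0 (y : R) : 0 <= `|y| + y.
Proof. by have := lerNnormlW (lexx `|y|); lra. Qed.

Lemma rsumD_ge0 a b : (forall x, 0 <= a x) -> (forall x, 0 <= b x) ->
  rsummable a -> rsummable b -> rsum (fun x => a x + b x) = rsum a + rsum b.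
Proof.
move=> a0 b0 sa sb; have ab0 x : 0 <= a x + b x by rewrite addr_ge0.
have := esumr_rsum ab0 (rsummableD sa sb).
by rewrite esumrD // (esumr_rsum a0 sa) (esumr_rsum b0 sb) => -[].
Qed.

Lemma rsumZ_ge0 k a : 0 <= k -> (forall x, 0 <= a x) -> rsummable a ->
  rsum (fun x => k * a x) = k * rsum a.
Proof.
move=> k0 a0 sa; have ka0 x : 0 <= k * a x by rewrite mulr_ge0.
have := esumr_rsum ka0 (rsummableZ k sa).
by rewrite esumrZ // (esumr_rsum a0 sa) => -[].
Qed.

Lemma rsum_subr_ge0 f a b : (forall x, 0 <= a x) -> (forall x, 0 <= b x) ->
  rsummable a -> rsummable b -> (forall x, f x = a x - b x) -> rsum f = rsum a - rsum b.
Proof.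
move=> a0 b0 sa sb fE.
have sf : rsummable f.
  apply: (@rsummable_le _ (fun x => a x + b x)) (rsummableD sa sb) => x.
  by rewrite fE (le_trans (ler_normB _ _)) // !ger0_norm.
have sp : rsummable (fun x => `|f x| + f x) by apply: rsummableD => //; apply: rsummable_norm.
have p0 x : 0 <= `|f x| + f x by apply: normr_add_ge0.
have n0 x : 0 <= `|f x| by [].
have : rsum (fun x => `|f x| + f x) + rsum b = rsum (fun x => `|f x|) + rsum a.
  rewrite -!rsumD_ge0 ?rsummable_norm //; congr rsum.
  by rewrite funeqE => x; rewrite fE; ring.
by rewrite [rsum f]/rsum (esumr_rsum p0 sp) (esumr_rsum n0 (rsummable_norm sf)) /=; lra.
Qed.

Lemma rsum_split f : rsummable f ->
  rsum f = rsum (fun x => `|f x| + f x) - rsum (fun x => `|f x|).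
Proof.
move=> sf; apply: rsum_subr_ge0 => //.
- by move=> x; apply: normr_add_ge0.
- by apply: rsummableD => //; apply: rsummable_norm.
- exact: rsummable_norm.
- by move=> x; ring.
Qed.

Lemma rsumD f g : rsummable f -> rsummable g ->
  rsum (fun x => f x + g x) = rsum f + rsum g.
Proof.
move=> sf sg; have sp h : rsummable h -> rsummable (fun x => `|h x| + h x).
  by move=> sh; apply: rsummableD => //; apply: rsummable_norm.
rewrite (rsum_split sf) (rsum_split sg).
rewrite (rsum_subr_ge0 (a := fun x => (`|f x| + f x) + (`|g x| + g x))
                       (b := fun x => `|f x| + `|g x|)); last first.
- by move=> x; ring.
- by apply: rsummableD; apply: rsummable_norm.
- by apply: rsummableD; apply: sp.
- by move=> x; rewrite addr_ge0.
- by move=> x; rewrite addr_ge0 // normr_add_ge0.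
rewrite (rsumD_ge0 (a := fun x => `|f x| + f x) (b := fun x => `|g x| + g x)) ?sp //;
  try by move=> x; apply: normr_add_ge0.
by rewrite (rsumD_ge0 (a := fun x => `|f x|) (b := fun x => `|g x|)) ?rsummable_norm //; ring.
Qed.

Lemma rsumZ k f : rsummable f -> rsum (fun x => k * f x) = k * rsum f.
Proof.
move=> sf; rewrite (rsum_split sf).
have p0 x : 0 <= `|f x| + f x by apply: normr_add_ge0.
have sp : rsummable (fun x => `|f x| + f x).
  by apply: rsummableD => //; apply: rsummable_norm.
have sn := rsummable_norm sf.
have [k0|/ltW k0] := leP 0 k.
  rewrite (rsum_subr_ge0 (a := fun x => k * (`|f x| + f x)) (b := fun x => k * `|f x|)).
  - by rewrite !rsumZ_ge0 //; ring.
  - by move=> x; rewrite mulr_ge0.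
  - by move=> x; rewrite mulr_ge0.
  - exact: rsummableZ.
  - exact: rsummableZ.
  - by move=> x; ring.
rewrite -oppr_ge0 in k0.
rewrite (rsum_subr_ge0 (a := fun x => - k * `|f x|) (b := fun x => - k * (`|f x| + f x))).
- by rewrite !rsumZ_ge0 //; ring.
- by move=> x; rewrite mulr_ge0.
- by move=> x; rewrite mulr_ge0.
- exact: rsummableZ.
- exact: rsummableZ.
- by move=> x; ring.
Qed.

Lemma rsum_comb f k g : rsummable f -> rsummable g ->
  rsum (fun x => f x + k * g x) = rsum f + k * rsum g.
Proof. by move=> sf sg; rewrite rsumD ?rsumZ //; apply: rsummableZ. Qed.

Lemma rsum0 : rsum (fun=> 0) = 0.
Proof.
have s0 : rsummable (fun=> 0 : R) by rewrite rsummable_ge0 // esumr0 ltry.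
by have := esumr_rsum (fun=> lexx 0) s0; rewrite esumr0 => -[].
Qed.

End RealSum.

Section ComplexParts.
Context {R : rcfType}.
Local Notation C := R[i].
Local Open Scope complex_scope.
Implicit Types x y : C.

Lemma complex_ext x y : Re x = Re y -> Im x = Im y -> x = y.
Proof. by case: x => a b; case: y => c d /= -> ->. Qed.

Lemma Re_add x y : Re (x + y) = Re x + Re y. Proof. by case: x; case: y. Qed.
Lemma Im_add x y : Im (x + y) = Im x + Im y. Proof. by case: x; case: y. Qed.
Lemma Re_opp x : Re (- x) = - Re x. Proof. by case: x. Qed.
Lemma Im_opp x : Im (- x) = - Im x. Proof. by case: x. Qed.
Lemma Re_mul x y : Re (x * y) = Re x * Re y - Im x * Im y.
Proof. by case: x; case: y. Qed.
Lemma Im_mul x y : Im (x * y) = Re x * Im y + Im x * Re y.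
Proof. by case: x => a b; case: y => c d /=; rewrite addrC. Qed.
Lemma Re_conj x : Re x^* = Re x. Proof. by case: x. Qed.
Lemma Im_conj x : Im x^* = - Im x. Proof. by case: x. Qed.

Definition ReImE :=
  (Re_add, Im_add, Re_opp, Im_opp, Re_mul, Im_mul, Re_conj, Im_conj).

End ComplexParts.

Section SquaredModulus.
Context {R : realType}.
Local Notation C := R[i].
Local Open Scope complex_scope.
Implicit Types x y z : C.

Lemma pw_sqmodE z : pw_sqmod z = Re z ^+ 2 + Im z ^+ 2.
Proof. by []. Qed.

Lemma pw_sqmod_ge0 z : 0 <= pw_sqmod z.
Proof. by rewrite addr_ge0 ?sqr_ge0. Qed.

Lemma pw_sqmod_eq0 z : pw_sqmod z = 0 -> z = 0.
Proof.
rewrite pw_sqmodE => /eqP; rewrite paddr_eq0 ?sqr_ge0 // !sqrf_eq0.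
by case/andP => /eqP re0 /eqP im0; apply: complex_ext.
Qed.

Lemma pw_sqmodM x y : pw_sqmod (x * y) = pw_sqmod x * pw_sqmod y.
Proof. by rewrite !pw_sqmodE !ReImE; ring. Qed.

Lemma pw_sqmod_conj z : pw_sqmod z^* = pw_sqmod z.
Proof. by rewrite !pw_sqmodE !ReImE sqrrN. Qed.

Lemma mulJc z : z^* * z = (pw_sqmod z)%:C.
Proof. by apply: complex_ext; rewrite pw_sqmodE !ReImE /=; ring. Qed.

Lemma pw_sqmodD_le x y : pw_sqmod (x + y) <= 2 * (pw_sqmod x + pw_sqmod y).
Proof.
rewrite !pw_sqmodE !ReImE.
have := sqr_ge0 (Re x - Re y); have := sqr_ge0 (Im x - Im y); nra.
Qed.

Lemma normr_Re_conjM_le x y : `|Re (x^* * y)| <= pw_sqmod x + pw_sqmod y.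
Proof.
rewrite !pw_sqmodE !ReImE ler_norml.
have := sqr_ge0 (Re x + Re y); have := sqr_ge0 (Re x - Re y).
have := sqr_ge0 (Im x + Im y); have := sqr_ge0 (Im x - Im y).
move=> *; apply/andP; split; nra.
Qed.

Lemma normr_Im_conjM_le x y : `|Im (x^* * y)| <= pw_sqmod x + pw_sqmod y.
Proof.
rewrite !pw_sqmodE !ReImE ler_norml.
have := sqr_ge0 (Re x + Im y); have := sqr_ge0 (Re x - Im y).
have := sqr_ge0 (Im x + Re y); have := sqr_ge0 (Im x - Re y).
move=> *; apply/andP; split; nra.
Qed.

End SquaredModulus.

Section L2.
Context {R : realType} {T : countType}.
Local Notation C := R[i].
Local Open Scope complex_scope.
Implicit Types (f g w x : T -> C) (a c : C).

Definition normsq f : R := rsum (fun i => pw_sqmod (f i)).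

Definition dotc f g : C :=
  rsum (fun i => Re ((f i)^* * g i)) +i* rsum (fun i => Im ((f i)^* * g i)).

Lemma l2_rsummable f : pw_l2 f <-> rsummable (fun i => pw_sqmod (f i)).
Proof. by rewrite rsummable_ge0 // => i; apply: pw_sqmod_ge0. Qed.

Lemma pw_sqnormE f : pw_l2 f -> pw_sqnorm f = (normsq f)%:E.
Proof. by move/l2_rsummable; apply: esumr_rsum => i; apply: pw_sqmod_ge0. Qed.

Lemma normsqE f (r : R) : pw_l2 f -> pw_sqnorm f = r%:E -> normsq f = r.
Proof. by move=> /pw_sqnormE -> []. Qed.

Lemma l2_comb a f g : pw_l2 f -> pw_l2 g -> pw_l2 (fun i => a * f i + g i).
Proof.
move=> /l2_rsummable sf /l2_rsummable sg; apply/l2_rsummable.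
apply: (@rsummable_le _ _ _ (fun i => (2 * pw_sqmod a) * pw_sqmod (f i) + 2 * pw_sqmod (g i))).
  move=> i; rewrite ger0_norm ?pw_sqmod_ge0 // -mulrA -pw_sqmodM -mulrDr.
  exact: pw_sqmodD_le.
by apply: rsummableD; apply: rsummableZ.
Qed.

Lemma pw_sqnorm0 : pw_sqnorm (fun _ : T => 0 : C) = 0%E.
Proof. by rewrite /pw_sqnorm esum1 // => i _; rewrite pw_sqmodE /= expr0n addr0. Qed.

Lemma l2_0 : pw_l2 (fun _ : T => 0 : C).
Proof. by rewrite /pw_l2 pw_sqnorm0. Qed.

Lemma pw_sqnorm_eq0 f : pw_sqnorm f = 0%E -> f = (fun=> 0).
Proof.
move=> f0; rewrite funeqE => i; apply: pw_sqmod_eq0; apply/eqP.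
have : ((pw_sqmod (f i))%:E <= pw_sqnorm f)%E.
  by apply: esumr_ge => j; apply: pw_sqmod_ge0.
by rewrite f0 lee_fin eq_le pw_sqmod_ge0 andbT.
Qed.

Lemma rsummable_Re_dot f g : pw_l2 f -> pw_l2 g ->
  rsummable (fun i => Re ((f i)^* * g i)).
Proof.
move=> /l2_rsummable sf /l2_rsummable sg.
by apply: rsummable_le (rsummableD sf sg) => i; apply: normr_Re_conjM_le.
Qed.

Lemma rsummable_Im_dot f g : pw_l2 f -> pw_l2 g ->
  rsummable (fun i => Im ((f i)^* * g i)).
Proof.
move=> /l2_rsummable sf /l2_rsummable sg.
by apply: rsummable_le (rsummableD sf sg) => i; apply: normr_Im_conjM_le.
Qed.

Lemma dotc_comb w a f g : pw_l2 w -> pw_l2 f -> pw_l2 g ->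
  dotc w (fun i => a * f i + g i) = a * dotc w f + dotc w g.
Proof.
move=> lw lf lg; have [sRf sIf] := (rsummable_Re_dot lw lf, rsummable_Im_dot lw lf).
have [sRg sIg] := (rsummable_Re_dot lw lg, rsummable_Im_dot lw lg).
apply: complex_ext; rewrite /dotc !ReImE /=.
- rewrite (_ : (fun i => _) = fun i => (Re ((w i)^* * g i) + Re a * Re ((w i)^* * f i))
                                        + (- Im a) * Im ((w i)^* * f i)).
    by rewrite !rsum_comb ?rsummable_comb //; ring.
  by rewrite funeqE => i; rewrite !ReImE; ring.
- rewrite (_ : (fun i => _) = fun i => (Im ((w i)^* * g i) + Re a * Im ((w i)^* * f i))
                                        + Im a * Re ((w i)^* * f i)).
    by rewrite !rsum_comb ?rsummable_comb //; ring.
  by rewrite funeqE => i; rewrite !ReImE; ring.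
Qed.

Lemma dotcC f g : pw_l2 f -> pw_l2 g -> dotc f g = (dotc g f)^*.
Proof.
move=> lf lg; apply: complex_ext; rewrite /dotc ReImE /=.
  by congr rsum; rewrite funeqE => i; rewrite !ReImE; ring.
rewrite -mulN1r -rsumZ ?rsummable_Im_dot //.
by congr rsum; rewrite funeqE => i; rewrite !ReImE; ring.
Qed.

Lemma dotcc f : dotc f f = (normsq f)%:C.
Proof.
have e i : (f i)^* * f i = (pw_sqmod (f i))%:C := mulJc (f i).
rewrite /dotc (eq_fun (fun i => congr1 Re (e i))) (eq_fun (fun i => congr1 Im (e i))) /=.
by rewrite rsum0.
Qed.

Lemma l2_subZ x c w : pw_l2 x -> pw_l2 w -> pw_l2 (fun i => x i - c * w i).
Proof.
move=> lx lw; rewrite (_ : (fun i => _) = fun i => - c * w i + x i); first exact: l2_comb.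
by rewrite funeqE => i; rewrite mulNr addrC.
Qed.

Lemma pw_sqnorm_subZ x c w : pw_l2 x -> pw_l2 w ->
  pw_sqnorm (fun i => x i - c * w i) =
  (normsq x - 2 * Re (c^* * dotc w x) + pw_sqmod c * normsq w)%:E.
Proof.
move=> lx lw; rewrite pw_sqnormE; last exact: l2_subZ.
congr (_%:E).
have [sx sw] := (proj1 (l2_rsummable x) lx, proj1 (l2_rsummable w) lw).
have [sR sI] := (rsummable_Re_dot lw lx, rsummable_Im_dot lw lx).
rewrite /normsq (_ : (fun i => _) = fun i =>
  ((pw_sqmod (x i) + (-2 * Re c) * Re ((w i)^* * x i)) + (-2 * Im c) * Im ((w i)^* * x i))
  + pw_sqmod c * pw_sqmod (w i)).
  by rewrite !rsum_comb ?rsummable_comb // /dotc !ReImE /=; ring.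
by rewrite funeqE => i; rewrite !pw_sqmodE !ReImE; ring.
Qed.

End L2.

Section UnitaryTheory.
Context {R : realType} {T1 T2 : countType} (V : (T1 -> R[i]) -> (T2 -> R[i])).
Hypothesis unitV : pw_unitary V.
Implicit Types (f g : T1 -> R[i]) (h : T2 -> R[i]).

Lemma unitary_l2 f : pw_l2 f -> pw_l2 (V f).
Proof. by case: unitV => + _ _ _; apply. Qed.

Lemma unitary_comb (a : R[i]) f g : pw_l2 f -> pw_l2 g ->
  V (fun x => a * f x + g x) = (fun y => a * V f y + V g y).
Proof. by case: unitV => _ + _ _; apply. Qed.

Lemma unitary_sqnorm f : pw_l2 f -> pw_sqnorm (V f) = pw_sqnorm f.
Proof. by case: unitV => _ _ + _; apply. Qed.

Lemma unitary_surj h : pw_l2 h -> exists2 f, pw_l2 f & V f = h.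
Proof. by case: unitV => _ _ _; apply. Qed.

Lemma unitary0 : V (fun=> 0) = (fun=> 0).
Proof.
have := unitary_comb (-1) l2_0 l2_0.
rewrite (_ : (fun x => _) = fun=> 0); last by rewrite funeqE => x; rewrite mulr0 addr0.
by move=> ->; rewrite funeqE => y; rewrite mulN1r addNr.
Qed.

Lemma unitary_inj f g : pw_l2 f -> pw_l2 g -> V f = V g -> f = g.
Proof.
move=> lf lg eqV; have l := l2_comb (-1) lg lf.
have := unitary_sqnorm l; rewrite unitary_comb // eqV.
rewrite (_ : (fun y => _) = fun=> 0); last by rewrite funeqE => y; rewrite mulN1r addNr.
rewrite pw_sqnorm0 => /esym /pw_sqnorm_eq0 gf0; rewrite funeqE => x.
by move/(congr1 (fun F => F x))/eqP: gf0; rewrite mulN1r addrC subr_eq0 => /eqP.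
Qed.

Definition uinv h : T1 -> R[i] :=
  if pselect (exists2 f, pw_l2 f & V f = h) is left ex then projT1 (cid2 ex) else fun=> 0.

Lemma uinv_l2 h : pw_l2 h -> pw_l2 (uinv h).
Proof.
move=> lh; rewrite /uinv; case: pselect => [ex|]; first by case: (projT2 (cid2 ex)).
by move/(_ (unitary_surj lh)).
Qed.

Lemma uinvKV h : pw_l2 h -> V (uinv h) = h.
Proof.
move=> lh; rewrite /uinv; case: pselect => [ex|]; first by case: (projT2 (cid2 ex)).
by move/(_ (unitary_surj lh)).
Qed.

Lemma uinvK f : pw_l2 f -> uinv (V f) = f.
Proof.
move=> lf; have lVf := unitary_l2 lf.
by apply: unitary_inj => //; [apply: uinv_l2 | rewrite uinvKV].
Qed.

Lemma uinv_unitary : pw_unitary uinv.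
Proof.
split.
- exact: uinv_l2.
- move=> a h1 h2 l1 l2; have [l1' l2'] := (uinv_l2 l1, uinv_l2 l2).
  apply: unitary_inj; [exact: uinv_l2 (l2_comb a l1 l2) | exact: l2_comb |].
  by rewrite unitary_comb // !uinvKV //; exact: l2_comb.
- by move=> h lh; rewrite -[in RHS](uinvKV lh) unitary_sqnorm //; exact: uinv_l2.
- by move=> f lf; exists (V f); [exact: unitary_l2 | exact: uinvK].
Qed.

End UnitaryTheory.

Section UnitaryConstructions.
Context {R : realType}.
Local Notation C := R[i].
Local Open Scope complex_scope.

Lemma comp_unitary (T1 T2 T3 : countType)
    (V1 : (T1 -> C) -> (T2 -> C)) (V2 : (T2 -> C) -> (T3 -> C)) :
  pw_unitary V1 -> pw_unitary V2 -> pw_unitary (V2 \o V1).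
Proof.
move=> u1 u2; split=> [f lf | a f g lf lg | f lf | h lh] /=.
- by apply: (unitary_l2 u2); apply: (unitary_l2 u1).
- by rewrite (unitary_comb u1) // (unitary_comb u2) //; exact: unitary_l2.
- by rewrite (unitary_sqnorm u2) ?(unitary_sqnorm u1) //; exact: unitary_l2.
- have [g lg <-] := unitary_surj u2 lh.
  by have [f lf <-] := unitary_surj u1 lg; exists f.
Qed.

Lemma id_unitary (T : countType) : pw_unitary (@id (T -> C)).
Proof. by split => // g lg; exists g. Qed.

Lemma iter_unitary (T : countType) (V : (T -> C) -> (T -> C)) n :
  pw_unitary V -> pw_unitary (iter n V).
Proof.
move=> uV; elim: n => [|n IHn]; first exact: id_unitary.
by rewrite (_ : iter n.+1 V = V \o iter n V); [exact: comp_unitary | rewrite funeqE].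
Qed.

Lemma scale_unitary (T : countType) (mu : C) : pw_sqmod mu = 1 ->
  pw_unitary (fun (f : T -> C) i => mu * f i).
Proof.
move=> mu1; have sqnormZ nu (f : T -> C) : pw_sqmod nu = 1 ->
    pw_sqnorm (fun i => nu * f i) = pw_sqnorm f.
  by move=> nu1; apply: eq_esum => i _; rewrite pw_sqmodM nu1 mul1r.
split.
- by move=> f lf; rewrite /pw_l2 sqnormZ.
- by move=> a f g _ _; rewrite funeqE => i; rewrite mulrDr mulrCA.
- by move=> f _; rewrite sqnormZ.
- move=> g lg; exists (fun i => mu^* * g i); first by rewrite /pw_l2 sqnormZ ?pw_sqmod_conj.
  by rewrite funeqE => i; rewrite mulrA [mu * _]mulrC mulJc mu1 mul1r.
Qed.

Lemma reindex_unitary (I J : countType) (e : I -> J) (e' : J -> I) :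
  cancel e e' -> cancel e' e -> pw_unitary (fun (f : I -> C) j => f (e' j)).
Proof.
move=> eK e'K; have sqnorm_reindex (f : I -> C) :
    pw_sqnorm (fun j => f (e' j)) = pw_sqnorm f.
  rewrite /pw_sqnorm (@reindex_esum _ _ _ [set: I] [set: J] e).
    by apply: eq_esum => i _; rewrite eK.
  by rewrite setTT_bijective; exists e'.
split.
- by move=> f lf; rewrite /pw_l2 sqnorm_reindex.
- by [].
- by move=> f _; rewrite sqnorm_reindex.
- move=> g lg; exists (fun i => g (e i)).
    by rewrite /pw_l2 -sqnorm_reindex (_ : (fun j => _) = g) // funeqE => j; rewrite e'K.
  by rewrite funeqE => j; rewrite e'K.
Qed.

End UnitaryConstructions.

Section Householder.
Context {R : realType} {T : countType}.
Local Notation C := R[i].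
Local Open Scope complex_scope.
Implicit Types (w x f g : T -> C).

(* The coefficient vanishes when [normsq w = 0], since then [2 / normsq w = 0]. *)
Definition householder_coef w x : C := (2 / normsq w)%:C * dotc w x.

Definition householder w x : T -> C := fun i => x i - householder_coef w x * w i.

Lemma l2_householder w x : pw_l2 w -> pw_l2 x -> pw_l2 (householder w x).
Proof. by move=> lw lx; rewrite /householder; apply: l2_subZ. Qed.

Lemma householder_coef_comb w (a : C) f g : pw_l2 w -> pw_l2 f -> pw_l2 g ->
  householder_coef w (fun i => a * f i + g i) =
  a * householder_coef w f + householder_coef w g.
Proof. by move=> lw lf lg; rewrite /householder_coef dotc_comb // mulrDr mulrCA. Qed.

Lemma householder_coefK w x : pw_l2 w -> pw_l2 x ->
  householder_coef w (householder w x) = - householder_coef w x.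
Proof.
move=> lw lx; rewrite (_ : householder w x = fun i => - householder_coef w x * w i + x i).
  rewrite householder_coef_comb // [householder_coef w w]/householder_coef dotcc.
  have [N0|N0] := eqVneq (normsq w) 0.
    by rewrite /householder_coef N0 invr0 mulr0 raddf0 !mul0r oppr0 mulr0 addr0.
  by rewrite -rmorphM divfK // rmorph_nat; ring.
by rewrite funeqE => i; rewrite /householder mulNr addrC.
Qed.

Lemma householder_sqnorm w x : pw_l2 w -> pw_l2 x ->
  pw_sqnorm (householder w x) = pw_sqnorm x.
Proof.
move=> lw lx; rewrite /householder pw_sqnorm_subZ // pw_sqnormE //; congr (_%:E).
rewrite /householder_coef !pw_sqmodE !ReImE /=.
have [->|N0] := eqVneq (normsq w) 0; first by rewrite invr0 mulr0; ring.
by field.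
Qed.

Lemma householder_comb w (a : C) f g : pw_l2 w -> pw_l2 f -> pw_l2 g ->
  householder w (fun i => a * f i + g i) =
  (fun i => a * householder w f i + householder w g i).
Proof.
move=> lw lf lg; rewrite funeqE => i.
by rewrite /householder householder_coef_comb //; ring.
Qed.

Lemma householderK w x : pw_l2 w -> pw_l2 x -> householder w (householder w x) = x.
Proof.
move=> lw lx; rewrite funeqE => i.
by rewrite {1}/householder householder_coefK // /householder mulNr opprK subrK.
Qed.

Lemma householder_unitary w : pw_l2 w -> pw_unitary (householder w).
Proof.
move=> lw; split=> [f lf | a f g lf lg | f lf | g lg].
- exact: l2_householder.
- exact: householder_comb.
- exact: householder_sqnorm.
- by exists (householder w g); [exact: l2_householder | exact: householderK].
Qed.

End Householder.

Section UnitaryTransitivity.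
Context {R : realType}.
Local Notation C := R[i].
Local Open Scope complex_scope.

Lemma exists_phase (z : C) : exists2 mu : C, pw_sqmod mu = 1 & Im (mu^* * z) = 0.
Proof.
have [->|z0] := eqVneq z 0.
  by exists 1; rewrite ?mulr0 // pw_sqmodE /= expr0n addr0 expr1n.
pose s := Num.sqrt (pw_sqmod z).
have s0 : s != 0.
  rewrite sqrtr_eq0 -ltNge lt_def pw_sqmod_ge0 andbT.
  by apply: contra z0 => /eqP/pw_sqmod_eq0->.
exists ((Re z / s) +i* (Im z / s)); last by rewrite !ReImE /=; field.
rewrite pw_sqmodE /= !expr_div_n -mulrDl -pw_sqmodE sqr_sqrtr ?pw_sqmod_ge0 // divff //.
by apply: contra s0 => /eqP s2; rewrite /s s2 sqrtr0.
Qed.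

Lemma unitary_transitive (T : countType) (u v : T -> C) :
  pw_l2 u -> pw_sqnorm u = 1%E -> pw_l2 v -> pw_sqnorm v = 1%E ->
  exists2 W, pw_unitary W & W u = v.
Proof.
move=> lu u1 lv v1; have [mu mu1 Im0] := exists_phase (dotc v u).
(* With [r] real, [normsq w = 2 - 2 r] and [dotc w u = 1 - r], so the reflection
   along [w] sends [u] to [u - w = mu v]; if [r = 1] then [w = 0] already. *)
pose r := Re (mu^* * dotc v u); pose w := fun i => u i - mu * v i.
have lw : pw_l2 w by exact: l2_subZ.
have normsq_w : normsq w = 2 - 2 * r.
  apply: normsqE => //; rewrite /w pw_sqnorm_subZ // (normsqE lu u1) (normsqE lv v1) mu1.
  by congr (_%:E); ring.
have dotc_w : dotc w u = (1 - r)%:C.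
  rewrite dotcC // /w (_ : (fun i => _) = fun i => - mu * v i + u i); last first.
    by rewrite funeqE => i; rewrite mulNr addrC.
  rewrite dotc_comb // dotcc (normsqE lu u1) (dotcC lu lv).
  by apply: complex_ext; move: Im0; rewrite /r /dotc !ReImE /=; lra.
have Hu : householder w u = fun i => mu * v i.
  have [N0|N0] := eqVneq (normsq w) 0.
    have /pw_sqnorm_eq0 w0 : pw_sqnorm w = 0%E by rewrite pw_sqnormE // N0.
    rewrite /householder w0 funeqE => i; rewrite mulr0 subr0.
    by move/(congr1 (fun F => F i))/eqP: w0; rewrite subr_eq0 => /eqP.
  have coef1 : householder_coef w u = 1.
    rewrite /householder_coef dotc_w -rmorphM normsq_w.
    have r1 : 1 - r != 0 by apply: contra N0 => /eqP r1; rewrite normsq_w; apply/eqP; lra.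
    by rewrite [2 - _](_ : _ = 2 * (1 - r)) ?invfM -?mulrA ?mulVf ?mulr1 ?divff //; ring.
  by rewrite funeqE => i; rewrite /householder coef1 mul1r /w opprB addrC subrK.
exists ((fun f i => mu^* * f i) \o householder w).
  apply: comp_unitary; first exact: householder_unitary.
  by apply: scale_unitary; rewrite pw_sqmod_conj.
by rewrite /= Hu funeqE => i; rewrite mulrA mulJc mu1 mul1r.
Qed.

Lemma exists_unitary_map (I J : countType) (u : I -> C) (v : J -> C) :
  (exists e : I -> J, bijective e) ->
  pw_l2 u -> pw_sqnorm u = 1%E -> pw_l2 v -> pw_sqnorm v = 1%E ->
  exists2 W, pw_unitary W & W u = v.
Proof.
move=> [e [e' eK e'K]] lu u1 lv v1.
have uE : pw_unitary (fun (f : I -> C) j => f (e' j)) := reindex_unitary eK e'K.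
have [|W uW <-] := unitary_transitive (unitary_l2 uE lu) _ lv v1.
  by rewrite (unitary_sqnorm uE).
by exists (W \o fun f j => f (e' j)); [exact: comp_unitary|].
Qed.

End UnitaryTransitivity.

Lemma int_ind_step (P : int -> Prop) :
  P 0 -> (forall t, P t -> P (t + 1)) -> (forall t, P t -> P (t - 1)) -> forall t, P t.
Proof.
move=> P0 PS PP; case=> n; elim: n => [|n IHn] //.
- by rewrite -addn1 PoszD; apply: PS.
- exact: (PP 0).
- by rewrite (_ : Negz n.+1 = Negz n - 1); [apply: PP | rewrite !NegzE; lia].
Qed.

Section UnitaryPowers.
Context {R : realType} {T : countType} (V : (T -> R[i]) -> (T -> R[i])).
Hypothesis unitV : pw_unitary V.
Implicit Types f : T -> R[i].

Definition upow (n : int) : (T -> R[i]) -> (T -> R[i]) :=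
  match n with Posz k => iter k V | Negz k => iter k.+1 (uinv V) end.

Lemma upow_unitary n : pw_unitary (upow n).
Proof. by case: n => k; apply: iter_unitary => //; apply: uinv_unitary. Qed.

Lemma l2_upow n f : pw_l2 f -> pw_l2 (upow n f).
Proof. exact: (unitary_l2 (upow_unitary n)). Qed.

Lemma upowS t f : pw_l2 f -> upow (t + 1) f = V (upow t f).
Proof.
move=> lf; case: t => k; first by rewrite -PoszD addn1.
have lVk : pw_l2 (iter k (uinv V) f).
  exact: (unitary_l2 (iter_unitary k (uinv_unitary unitV)) lf).
by rewrite /= uinvKV //; case: k lVk => [|k] //= _; rewrite subn1.
Qed.

Lemma upowB1 t f : pw_l2 f -> upow (t - 1) f = uinv V (upow t f).
Proof.
by move=> lf; rewrite -[in RHS](subrK 1 t) upowS // (uinvK unitV) //; apply: l2_upow.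
Qed.

Lemma upowD m n f : pw_l2 f -> upow (m + n) f = upow m (upow n f).
Proof.
move=> lf; elim/int_ind_step: m => [|m IHm|m IHm]; first by rewrite add0r.
- by rewrite addrAC !upowS ?IHm //; apply: l2_upow.
- by rewrite addrAC !upowB1 ?IHm //; apply: l2_upow.
Qed.

End UnitaryPowers.

Section Slices.
Context {R : realType}.
Local Notation C := R[i].

Definition slice {T : countType} (F : int * T -> C) (t : int) : T -> C := fun i => F (t, i).

Lemma pw_sqnorm_slices (T : countType) (F : int * T -> C) :
  pw_sqnorm F = (\esum_(t in [set: int]) pw_sqnorm (slice F t))%E.
Proof.
rewrite /pw_sqnorm esum_esum; last by move=> *; rewrite lee_fin pw_sqmod_ge0.
rewrite (_ : _ `*`` _ = [set: int * T])%classic; last by apply/seteqP; split.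
by apply: eq_esum => -[].
Qed.

Lemma l2_slice (T : countType) (F : int * T -> C) t : pw_l2 F -> pw_l2 (slice F t).
Proof.
rewrite /pw_l2 pw_sqnorm_slices; apply: le_lt_trans; apply: esum_ge.
exists [set t]%classic; first by split => //; exact: finite_set1.
by rewrite fsbig_set1.
Qed.

Section Slicewise.
Context {I J : countType} (A : int -> (I -> C) -> (J -> C)).
Hypothesis unitA : forall t, pw_unitary (A t).

Definition slicewise (F : int * I -> C) : int * J -> C := fun p => A p.1 (slice F p.1) p.2.

Lemma slicewise_sqnorm F : pw_l2 F -> pw_sqnorm (slicewise F) = pw_sqnorm F.
Proof.
move=> lF; rewrite !pw_sqnorm_slices; apply: eq_esum => t _.
exact: (unitary_sqnorm (unitA t) (l2_slice t lF)).
Qed.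

Lemma slicewise_unitary : pw_unitary slicewise.
Proof.
split=> [F lF | a F G lF lG | F lF | G lG].
- by rewrite /pw_l2 slicewise_sqnorm.
- rewrite funeqE => -[t j] /=.
  by rewrite /slicewise /= (unitary_comb (unitA t)) //; exact: l2_slice.
- exact: slicewise_sqnorm.
pose F p := uinv (A p.1) (slice G p.1) p.2.
have sliceF t : slice F t = uinv (A t) (slice G t) by [].
exists F; last first.
  by rewrite funeqE => -[t j]; rewrite /slicewise /= sliceF uinvKV //; exact: l2_slice.
rewrite /pw_l2 pw_sqnorm_slices.
under eq_esum => t _ do
  rewrite sliceF (unitary_sqnorm (uinv_unitary (unitA t)) (l2_slice t lG)).
by rewrite -pw_sqnorm_slices.
Qed.

End Slicewise.
End Slices.

Section Kets.
Context {R : realType}.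
Local Notation C := R[i].

Lemma slice_ket (T : countType) t (phi : T -> C) s :
  slice (pw_ket t phi) s = if s == t then phi else fun=> 0.
Proof. by rewrite /slice /pw_ket /=; case: (s == t). Qed.

Lemma pw_sqnorm_ket (T : countType) t (phi : T -> C) :
  pw_sqnorm (pw_ket t phi) = pw_sqnorm phi.
Proof.
rewrite pw_sqnorm_slices
  (eq_esum (b := fun s => if s \in [set t]%classic then pw_sqnorm phi else 0%E)).
  by rewrite -esum_mkcond esum_set1 // esum_ge0 // => x _; rewrite lee_fin pw_sqmod_ge0.
move=> s _; rewrite slice_ket; have [->|st] := eqVneq s t; first by rewrite mem_set.
by rewrite memNset ?pw_sqnorm0 // => /= st'; rewrite st' eqxx in st.
Qed.

Lemma l2_ket (T : countType) t (phi : T -> C) : pw_l2 phi -> pw_l2 (pw_ket t phi).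
Proof. by rewrite /pw_l2 pw_sqnorm_ket. Qed.

Lemma slicewise_ket (I J : countType) (A : int -> (I -> C) -> (J -> C)) t phi :
  (forall s, pw_unitary (A s)) -> slicewise A (pw_ket t phi) = pw_ket t (A t phi).
Proof.
move=> unitA; rewrite funeqE => -[s j]; rewrite /slicewise /= slice_ket /pw_ket /=.
by case: eqP => [->|_] //; rewrite (unitary0 (unitA s)).
Qed.

Section ShiftTensor.
Context {T : countType} (Ur : (T -> C) -> (T -> C)).
Hypothesis unitUr : pw_unitary Ur.

Lemma shift_tensor_ket t phi : pw_shift_tensor Ur (pw_ket t phi) = pw_ket (t + 1) (Ur phi).
Proof.
rewrite funeqE => -[s i]; rewrite /pw_shift_tensor /pw_ket /= subr_eq.
by case: (s == t + 1) => //; rewrite (unitary0 unitUr).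
Qed.

Lemma shift_tensor_inj F G : pw_l2 F -> pw_l2 G ->
  pw_shift_tensor Ur F = pw_shift_tensor Ur G -> F = G.
Proof.
move=> lF lG eqFG; rewrite funeqE => -[t i].
have : slice F t = slice G t.
  apply: (unitary_inj unitUr (l2_slice t lF) (l2_slice t lG)); rewrite funeqE => j.
  by have := congr1 (fun H => H (t + 1, j)) eqFG; rewrite /pw_shift_tensor /= addrK.
by move/(congr1 (fun f => f i)).
Qed.

Lemma pw_orbit_shift_tensor psi Psi : pw_l2 psi ->
  pw_orbit (pw_shift_tensor Ur) (pw_ket 0 psi) Psi ->
  Psi = fun t => pw_ket t (upow Ur t psi).
Proof.
move=> lpsi [Psi0 PsiS]; rewrite funeqE; elim/int_ind_step => [|t IHt|t IHt] //.
- by rewrite (proj2 (PsiS t)) IHt shift_tensor_ket upowS.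
- apply: shift_tensor_inj; [exact: (proj1 (PsiS _)) | exact/l2_ket/l2_upow |].
  by rewrite -(proj2 (PsiS _)) subrK IHt shift_tensor_ket -upowS ?subrK.
Qed.

End ShiftTensor.
End Kets.

Lemma slicewise_shift_tensor (R : realType) (I J : countType)
    (A : int -> (I -> R[i]) -> (J -> R[i]))
    (V : (I -> R[i]) -> (I -> R[i])) (V' : (J -> R[i]) -> (J -> R[i])) :
  (forall t f, pw_l2 f -> A (t + 1) (V f) = V' (A t f)) ->
  forall F, pw_l2 F -> slicewise A (pw_shift_tensor V F) = pw_shift_tensor V' (slicewise A F).
Proof.
move=> AS F lF; rewrite funeqE => -[t j].
have := congr1 (fun H => H j) (AS (t - 1) _ (l2_slice (t - 1) lF)).
by rewrite subrK.
Qed.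

Section ConjugatePowers.
Context {R : realType} {I J : countType}.
Variables (V : (I -> R[i]) -> (I -> R[i])) (V' : (J -> R[i]) -> (J -> R[i])).
Variable W : (I -> R[i]) -> (J -> R[i]).
Hypotheses (unitV : pw_unitary V) (unitV' : pw_unitary V') (unitW : pw_unitary W).

Definition conj_upow (t : int) : (I -> R[i]) -> (J -> R[i]) :=
  upow V' t \o W \o upow V (- t).

Lemma conj_upow_unitary t : pw_unitary (conj_upow t).
Proof.
apply: comp_unitary; first exact: (upow_unitary unitV).
by apply: comp_unitary => //; exact: (upow_unitary unitV').
Qed.

Lemma conj_upowE t f : pw_l2 f -> conj_upow t (upow V t f) = upow V' t (W f).
Proof. by move=> lf; rewrite /conj_upow /= -(upowD unitV) // addNr. Qed.

Lemma conj_upowS t f : pw_l2 f -> conj_upow (t + 1) (V f) = V' (conj_upow t f).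
Proof.
move=> lf; have lVf := unitary_l2 unitV lf.
rewrite /conj_upow /= (upowS unitV'); last exact/(unitary_l2 unitW)/(l2_upow unitV).
by rewrite -[V f]/(upow V 1 f) -(upowD unitV) // opprD addrNK.
Qed.

End ConjugatePowers.

Theorem theorem3 (R : realType) (I J : countType)
    (Ur : (I -> R[i]) -> (I -> R[i])) (Ur' : (J -> R[i]) -> (J -> R[i]))
    (psi0 : I -> R[i]) (psi0' : J -> R[i])
    (Psi : int -> int * I -> R[i]) (Psi' : int -> int * J -> R[i]) :
  (exists e : I -> J, bijective e) ->
  pw_unitary Ur -> pw_unitary Ur' ->
  pw_l2 psi0 -> pw_sqnorm psi0 = 1%E ->
  pw_l2 psi0' -> pw_sqnorm psi0' = 1%E ->
  pw_orbit (pw_shift_tensor Ur) (pw_ket 0 psi0) Psi ->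
  pw_orbit (pw_shift_tensor Ur') (pw_ket 0 psi0') Psi' ->
  exists S : (int * I -> R[i]) -> (int * J -> R[i]),
    [/\ pw_unitary S,
        forall tau : int, Psi' tau = S (Psi tau)
      & forall F, pw_l2 F -> S (pw_shift_tensor Ur F) = pw_shift_tensor Ur' (S F)].
Proof.
move=> bij unitUr unitUr' lpsi psi1 lpsi' psi1' orbPsi orbPsi'.
have [W unitW Wpsi] := exists_unitary_map bij lpsi psi1 lpsi' psi1'.
pose A := conj_upow Ur Ur' W.
have unitA t : pw_unitary (A t) by exact: conj_upow_unitary.
exists (slicewise A); split.
- exact: slicewise_unitary.
- move=> tau; rewrite (pw_orbit_shift_tensor unitUr lpsi orbPsi).
  rewrite (pw_orbit_shift_tensor unitUr' lpsi' orbPsi') slicewise_ket //.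
  by rewrite /A conj_upowE // Wpsi.
- exact: slicewise_shift_tensor (conj_upowS unitUr unitUr' unitW).
Qed.
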